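(* Let $q$ be a Boolean conjunctive query without self-join. If $q$ is safe, then $\mathsf{CERTAINTY}(q)$ is first-order expressible.
   Context: Relation names have signatures $[n,k]$ ($n\ge k\ge 1$; arity $n$, primary key positions $1,\dots,k$). Atoms have variables or constants as arguments; a fact is an atom without variables; facts are key-equal if they have the same relation name and agree on the primary key. For an atom $F$, $\mathit{key}(F)$ is the set of variables in its primary-key positions and $\mathit{vars}(F)$ the set of its variables. An uncertain database is a finite set of facts; a repair is a maximal subset with no two distinct key-equal facts. A Boolean conjunctive query $q$ is a finite set of atoms (existentially closed conjunction), $\mathit{vars}(q)$ its set of variables; it has a self-join if some relation name occurs in two of its atoms. $\mathsf{CERTAINTY}(q)$ is the set of uncertain databases all of whose repairs satisfy $q$; it is first-order expressible if there is a first-order sentence $\varphi$ such that for every uncertain database ${\mathbf{db}}$, ${\mathbf{db}}\in\mathsf{CERTAINTY}(q)$ iff ${\mathbf{db}}\models\varphi$. For a variable $x$ and constant $a$, $q[x\mapsto a]$ denotes $q$ with every occurrence of $x$ replaced by $a$. Safety: $q$ is safe iff the following procedure $\mathrm{IsSafe}(q)$ returns true, where the rules are tried in order and the first applicable rule is executed ($a$ is an arbitrary fixed constant): (SE1) if $|q|=1$ and $\mathit{vars}(q)=\emptyset$, return true; (SE2) if $q=q_1\cup q_2$ with $q_1\neq\emptyset\neq q_2$ and $\mathit{vars}(q_1)\cap\mathit{vars}(q_2)=\emptyset$, return $\mathrm{IsSafe}(q_1)\wedge\mathrm{IsSafe}(q_2)$; (SE3) if $\bigcap_{F\in q}\mathit{key}(F)\neq\emptyset$,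 select $x$ in this intersection and return $\mathrm{IsSafe}(q[x\mapsto a])$; (SE4) if some $F\in q$ has $\mathit{key}(F)=\emptyset\neq\mathit{vars}(F)$, select such $F$ and some $x\in\mathit{vars}(F)$ and return $\mathrm{IsSafe}(q[x\mapsto a])$; otherwise return false. *)

From Stdlib Require Import List Arith.
Import ListNotations.

(* A relation name with signature [n,k]: an identifier, its arity n and the
   number k of primary-key positions (positions 1..k). *)
Record relname := RelName { rname : nat; rarity : nat; rkey : nat }.
Definition wf_rel (R : relname) : Prop := 1 <= rkey R /\ rkey R <= rarity R.

Inductive term := TVar (x : nat) | TCst (c : nat).

Record atom := Atom { arel : relname; aargs : list term }.
Record fact := Fact { frel : relname; fargs : list nat }.

Definition wf_atom (A : atom) : Prop :=
  wf_rel (arel A) /\ length (aargs A) = rarity (arel A).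
Definition wf_fact (f : fact) : Prop :=
  wf_rel (frel f) /\ length (fargs f) = rarity (frel f).

Definition term_vars (t : term) : list nat :=
  match t with TVar x => [x] | TCst _ => [] end.

Definition avars (A : atom) : list nat := flat_map term_vars (aargs A).
Definition akey (A : atom) : list nat :=
  flat_map term_vars (firstn (rkey (arel A)) (aargs A)).

(* An uncertain database is a finite set of facts (a list read as a set). *)
Definition db := list fact.
Definition wf_db (d : db) : Prop := Forall wf_fact d.

Definition key_equal (f g : fact) : Prop :=
  frel f = frel g /\
  firstn (rkey (frel f)) (fargs f) = firstn (rkey (frel g)) (fargs g).

Definition consistent (r : db) : Prop :=
  forall f g, In f r -> In g r -> key_equal f g -> f = g.

Definition is_repair (r d : db) : Prop :=
  incl r d /\ consistent r /\
  (forall r', incl r r' -> incl r' d -> consistent r' -> incl r' r).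

Definition query := list atom.
Definition wf_query (q : query) : Prop := Forall wf_atom q.

Definition qvars (q : query) : list nat := flat_map avars q.

Definition self_join_free (q : query) : Prop :=
  forall A B, In A q -> In B q -> arel A = arel B -> A = B.

Definition eval_term (v : nat -> nat) (t : term) : nat :=
  match t with TVar x => v x | TCst c => c end.

Definition ground (v : nat -> nat) (A : atom) : fact :=
  Fact (arel A) (map (eval_term v) (aargs A)).

Definition satisfies (d : db) (q : query) : Prop :=
  exists v : nat -> nat, forall A, In A q -> In (ground v A) d.

Definition certain (q : query) (d : db) : Prop :=
  forall r, is_repair r d -> satisfies r q.

Inductive formula :=
| FAtom (R : relname) (ts : list term)
| FEq (t1 t2 : term)
| FTrue
| FNot (phi : formula)
| FAnd (phi psi : formula)
| FOr (phi psi : formula)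
| FExists (x : nat) (phi : formula)
| FForall (x : nat) (phi : formula).

Definition upd (v : nat -> nat) (x c : nat) : nat -> nat :=
  fun y => if Nat.eqb y x then c else v y.

Fixpoint holds (d : db) (v : nat -> nat) (phi : formula) : Prop :=
  match phi with
  | FAtom R ts => In (Fact R (map (eval_term v) ts)) d
  | FEq t1 t2 => eval_term v t1 = eval_term v t2
  | FTrue => True
  | FNot p => ~ holds d v p
  | FAnd p1 p2 => holds d v p1 /\ holds d v p2
  | FOr p1 p2 => holds d v p1 \/ holds d v p2
  | FExists x p => exists c, holds d (upd v x c) p
  | FForall x p => forall c, holds d (upd v x c) p
  end.

Fixpoint fv (phi : formula) : list nat :=
  match phi with
  | FAtom _ ts => flat_map term_vars ts
  | FEq t1 t2 => term_vars t1 ++ term_vars t2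
  | FTrue => []
  | FNot p => fv p
  | FAnd p1 p2 | FOr p1 p2 => fv p1 ++ fv p2
  | FExists x p | FForall x p => remove Nat.eq_dec x (fv p)
  end.

Definition sentence (phi : formula) : Prop := fv phi = [].

(* d |= phi for a sentence (the valuation is irrelevant for sentences) *)
Definition models (d : db) (phi : formula) : Prop := holds d (fun _ => 0) phi.

Definition fo_expressible (q : query) : Prop :=
  exists phi, sentence phi /\
    forall d : db, wf_db d -> (certain q d <-> models d phi).

Definition subst_term (x a : nat) (t : term) : term :=
  match t with
  | TVar y => if Nat.eqb y x then TCst a else TVar y
  | TCst c => TCst c
  end.
Definition subst_atom (x a : nat) (A : atom) : atom :=
  Atom (arel A) (map (subst_term x a) (aargs A)).
Definition subst (x a : nat) (q : query) : query := map (subst_atom x a) q.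

(* applicability conditions of the rules (q read as a set) *)
Definition SE1_app (q : query) : Prop :=
  (exists F, forall G, In G q <-> G = F) /\ qvars q = [].
Definition SE2_app (q : query) : Prop :=
  exists q1 q2 : query, q1 <> [] /\ q2 <> [] /\
    (forall G, In G q <-> In G q1 \/ In G q2) /\
    (forall x, In x (qvars q1) -> ~ In x (qvars q2)).
Definition SE3_app (q : query) : Prop :=
  exists x, forall F, In F q -> In x (akey F).

(* safe a q : the procedure IsSafe (with fixed constant a) has a run
   returning true on q. Rules are tried in order. *)
Inductive safe (a : nat) : query -> Prop :=
| safe_SE1 q : SE1_app q -> safe a q
| safe_SE2 q q1 q2 :
    ~ SE1_app q ->
    q1 <> [] -> q2 <> [] ->
    (forall G, In G q <-> In G q1 \/ In G q2) ->
    (forall x, In x (qvars q1) -> ~ In x (qvars q2)) ->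
    safe a q1 -> safe a q2 -> safe a q
| safe_SE3 q x :
    ~ SE1_app q -> ~ SE2_app q ->
    (forall F, In F q -> In x (akey F)) ->
    safe a (subst x a q) -> safe a q
| safe_SE4 q F x :
    ~ SE1_app q -> ~ SE2_app q -> ~ SE3_app q ->
    In F q -> akey F = [] -> In x (avars F) ->
    safe a (subst x a q) -> safe a q.

(* Generalise certainty to [certain_at q X v]: every repair satisfies [q]
   through a valuation that extends [v] on the variables [X] already replaced
   by the constant in the run of IsSafe, on a database from which the run has
   pruned some blocks. Following the run, we build a first-order formula with
   free variables [X] for it. SE1: the ground fact is present and alone in its
   block. SE2: a conjunction, since the two parts share only variables of [X].
   SE3: an existential over the key variable, because repairs refuting
   different values can be glued block by block. SE4: the block of the ground
   key is nonempty, and for each of its facts, the formula for the value it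
   gives to the variable holds on the database where that value is imposed on
   the block. For [X] empty and nothing pruned this is CERTAINTY(q). *)

From Stdlib Require Import List Arith Lia Classical ClassicalEpsilon.
Import ListNotations.

Definition relname_eq_dec (R S : relname) : {R = S} + {R <> S}.
Proof. decide equality; apply Nat.eq_dec. Defined.
Definition term_eq_dec (s t : term) : {s = t} + {s <> t}.
Proof. decide equality; apply Nat.eq_dec. Defined.
Definition atom_eq_dec (A B : atom) : {A = B} + {A <> B}.
Proof. decide equality; [apply (list_eq_dec term_eq_dec)|apply relname_eq_dec]. Defined.
Definition fact_eq_dec (f g : fact) : {f = g} + {f <> g}.
Proof. decide equality; [apply (list_eq_dec Nat.eq_dec)|apply relname_eq_dec]. Defined.

Lemma fact_eta (g : fact) : g = Fact (frel g) (fargs g).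
Proof. destruct g; reflexivity. Qed.

Lemma in_firstn {T} k (l : list T) y : In y (firstn k l) -> In y l.
Proof. intros H; rewrite <- (firstn_skipn k l); apply in_or_app; auto. Qed.

Lemma nth_firstn_lt {T} n (l : list T) i (dd : T) : i < n -> nth i (firstn n l) dd = nth i l dd.
Proof. intros H; rewrite nth_firstn; apply Nat.ltb_lt in H; rewrite H; reflexivity. Qed.

Lemma in_term_vars z ts : In z (flat_map term_vars ts) <-> In (TVar z) ts.
Proof.
  rewrite in_flat_map; split.
  - intros [[y|c] [Ht Hz]]; simpl in Hz; [destruct Hz as [->|[]]; auto|contradiction].
  - intros H; exists (TVar z); simpl; auto.
Qed.

Lemma term_vars_map_TVar z ys : In z (flat_map term_vars (map TVar ys)) <-> In z ys.
Proof.
  rewrite in_term_vars, in_map_iff; split; [intros [y [E H]]; congruence|eauto].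
Qed.

Lemma term_vars_nth z i ts : In z (term_vars (nth i ts (TCst 0))) -> In z (flat_map term_vars ts).
Proof.
  intros H; destruct (Nat.lt_ge_cases i (length ts)) as [Hl|Hl].
  - apply in_flat_map; exists (nth i ts (TCst 0)); split; auto; apply nth_In; auto.
  - rewrite nth_overflow in H by auto; destruct H.
Qed.

Lemma akey_avars z A : In z (akey A) -> In z (avars A).
Proof. unfold akey, avars; rewrite !in_term_vars; apply in_firstn. Qed.

Lemma eval_term_ext v w t :
  (forall z, In z (term_vars t) -> v z = w z) -> eval_term v t = eval_term w t.
Proof. destruct t; simpl; auto. Qed.

Lemma map_eval_term_ext v w ts :
  (forall z, In z (flat_map term_vars ts) -> v z = w z) ->
  map (eval_term v) ts = map (eval_term w) ts.
Proof.
  intros H; apply map_ext_in; intros t Ht; apply eval_term_ext; intros z Hz; apply H.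
  apply in_flat_map; eauto.
Qed.

Lemma map_eval_TVar v ys : map (eval_term v) (map TVar ys) = map v ys.
Proof. rewrite map_map; reflexivity. Qed.

Lemma nth_map_eval v ts i : nth i (map (eval_term v) ts) 0 = eval_term v (nth i ts (TCst 0)).
Proof. exact (map_nth (eval_term v) ts (TCst 0) i). Qed.

Lemma ground_ext v w A : (forall z, In z (avars A) -> v z = w z) -> ground v A = ground w A.
Proof. intros H; unfold ground; f_equal; apply map_eval_term_ext; exact H. Qed.

Lemma upd_eq v x c : upd v x c x = c.
Proof. unfold upd; rewrite Nat.eqb_refl; reflexivity. Qed.

Lemma upd_neq v x c y : y <> x -> upd v x c y = v y.
Proof. intros H; unfold upd; apply Nat.eqb_neq in H; rewrite H; reflexivity. Qed.

Fixpoint upds (v : nat -> nat) (ys cs : list nat) : nat -> nat :=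
  match ys, cs with
  | y :: ys', c :: cs' => upds (upd v y c) ys' cs'
  | _, _ => v
  end.

Lemma upds_notin v ys cs z : ~ In z ys -> upds v ys cs z = v z.
Proof.
  revert v cs; induction ys as [|y ys IH]; intros v cs H; destruct cs; simpl; auto.
  rewrite IH; [apply upd_neq|]; simpl in H; intuition.
Qed.

Lemma map_upds v ys cs : NoDup ys -> length cs = length ys -> map (upds v ys cs) ys = cs.
Proof.
  revert v cs; induction ys as [|y ys IH]; intros v [|c cs] Hn Hl; simpl in *; try lia; auto.
  inversion Hn; subst; f_equal.
  - rewrite upds_notin by auto; apply upd_eq.
  - apply IH; auto.
Qed.

Definition fresh_vars (X : list nat) (m : nat) : list nat := seq (S (list_max X)) m.

Lemma fresh_vars_notin z X m : In z X -> ~ In z (fresh_vars X m).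
Proof.
  intros H H'; apply in_seq in H'.
  pose proof (proj1 (list_max_le X (list_max X)) (le_n _)) as F.
  rewrite Forall_forall in F; specialize (F z H); lia.
Qed.

Lemma fresh_vars_NoDup X m : NoDup (fresh_vars X m).
Proof. apply seq_NoDup. Qed.

Lemma length_fresh_vars X m : length (fresh_vars X m) = m.
Proof. apply length_seq. Qed.

(** * Formulas *)

Definition FForalls (ys : list nat) (p : formula) : formula := fold_right FForall p ys.
Definition FExistss (ys : list nat) (p : formula) : formula := fold_right FExists p ys.
Definition FConj (l : list formula) : formula := fold_right FAnd FTrue l.
Definition FImpl (p q : formula) : formula := FOr (FNot p) q.

Lemma holds_FForalls d v ys p :
  holds d v (FForalls ys p) <-> forall cs, length cs = length ys -> holds d (upds v ys cs) p.
Proof.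
  revert v; induction ys as [|y ys IH]; intros v; simpl.
  - split; [intros H [|c cs] Hl; simpl in *; auto; lia|intros H; apply (H []); auto].
  - split.
    + intros H [|c cs] Hl; simpl in Hl; [lia|].
      apply (proj1 (IH _) (H c)); lia.
    + intros H c; apply IH; intros cs Hl; apply (H (c :: cs)); simpl; lia.
Qed.

Lemma holds_FExistss d v ys p :
  holds d v (FExistss ys p) <-> exists cs, length cs = length ys /\ holds d (upds v ys cs) p.
Proof.
  revert v; induction ys as [|y ys IH]; intros v; simpl.
  - split; [intros H; exists []; auto|intros [[|c cs] [Hl H]]; simpl in *; auto; lia].
  - split.
    + intros [c H]; apply IH in H; destruct H as [cs [Hl H]]; exists (c :: cs); simpl; auto.
    + intros [[|c cs] [Hl H]]; simpl in Hl; [lia|].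
      exists c; apply IH; exists cs; split; auto.
Qed.

Lemma holds_FConj d v l : holds d v (FConj l) <-> forall p, In p l -> holds d v p.
Proof.
  induction l as [|p l IH]; simpl; [split; auto; intros _ _ []|].
  rewrite IH; split; [intros [H1 H2] p' [<-|Hp]; auto|intros H; split; auto].
Qed.

Lemma holds_FImpl d v p q : holds d v (FImpl p q) <-> (holds d v p -> holds d v q).
Proof. simpl; split; [tauto|intros H; destruct (classic (holds d v p)); tauto]. Qed.

Lemma fv_FForalls z ys p : In z (fv (FForalls ys p)) -> In z (fv p) /\ ~ In z ys.
Proof.
  induction ys as [|y ys IH]; simpl; intros H; auto.
  apply in_remove in H; destruct H as [H1 H2]; apply IH in H1; intuition.
Qed.

Lemma fv_FExistss z ys p : In z (fv (FExistss ys p)) -> In z (fv p) /\ ~ In z ys.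
Proof.
  induction ys as [|y ys IH]; simpl; intros H; auto.
  apply in_remove in H; destruct H as [H1 H2]; apply IH in H1; intuition.
Qed.

Lemma fv_FConj z l : In z (fv (FConj l)) -> exists p, In p l /\ In z (fv p).
Proof.
  induction l as [|p l IH]; simpl; [intros []|].
  intros H; apply in_app_or in H; destruct H as [H|H]; [exists p; auto|].
  destruct (IH H) as [p' [? ?]]; exists p'; auto.
Qed.

Lemma holds_forall_eq_impl d v x y p : x <> y ->
  holds d v (FForall x (FImpl (FEq (TVar x) (TVar y)) p)) <-> holds d (upd v x (v y)) p.
Proof.
  intros Hxy; simpl; split.
  - intros H; destruct (H (v y)) as [H'|H']; auto.
    exfalso; apply H'; rewrite upd_eq, upd_neq; auto.
  - intros H c; rewrite upd_eq, upd_neq by auto.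
    destruct (Nat.eq_dec c (v y)) as [->|ne]; auto.
Qed.

(** * Blocks and pruned databases *)

Definition prefix_match (l K : list nat) : Prop :=
  forall i, i < length K -> nth i l 0 = nth i K 0.

Definition prefix_matchb (l K : list nat) : bool :=
  forallb (fun i => Nat.eqb (nth i l 0) (nth i K 0)) (seq 0 (length K)).

Lemma prefix_matchb_spec l K : prefix_matchb l K = true <-> prefix_match l K.
Proof.
  unfold prefix_matchb, prefix_match; rewrite forallb_forall; split.
  - intros H i Hi; apply Nat.eqb_eq, H, in_seq; lia.
  - intros H i Hi; apply in_seq in Hi; apply Nat.eqb_eq, H; lia.
Qed.

Lemma prefix_match_firstn k l K : k <= length l -> length K = k ->
  (prefix_match l K <-> firstn k l = K).
Proof.
  intros H1 H2; split.
  - intros Hk; apply (nth_ext _ _ 0 0); [rewrite length_firstn; lia|].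
    intros i Hi; rewrite length_firstn in Hi; rewrite nth_firstn_lt by lia; apply Hk; lia.
  - intros <- i Hi; rewrite length_firstn in Hi; rewrite nth_firstn_lt; auto; lia.
Qed.

Lemma prefix_match_full l K : length l = length K -> (prefix_match l K <-> l = K).
Proof.
  intros H; rewrite (prefix_match_firstn (length K) l K) by lia.
  rewrite <- H, firstn_all; tauto.
Qed.

Definition in_block (R : relname) (K : list nat) (g : fact) : Prop :=
  frel g = R /\ prefix_match (fargs g) K.

Lemma wf_db_In d g : wf_db d -> In g d -> wf_fact g.
Proof. unfold wf_db; rewrite Forall_forall; auto. Qed.

Lemma in_block_iff_key R K g : wf_fact g -> length K = rkey R ->
  (in_block R K g <-> frel g = R /\ firstn (rkey R) (fargs g) = K).
Proof.
  intros [[_ Hk] Hl] HK; unfold in_block; split; intros [HR H]; split; auto;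
    subst R; apply (prefix_match_firstn (rkey (frel g))); auto; lia.
Qed.

Lemma in_block_key_equal R K g h : wf_fact g -> wf_fact h -> length K = rkey R ->
  in_block R K g -> in_block R K h -> key_equal g h.
Proof.
  intros Hg Hh HK Bg Bh.
  apply in_block_iff_key in Bg; apply in_block_iff_key in Bh; auto.
  destruct Bg as [Eg Kg], Bh as [Eh Kh]; split; congruence.
Qed.

Lemma key_equal_in_block R K g h : wf_fact g -> wf_fact h -> length K = rkey R ->
  key_equal g h -> in_block R K h -> in_block R K g.
Proof.
  intros Hg Hh HK [E1 E2] Bh.
  apply in_block_iff_key in Bh; auto; apply in_block_iff_key; auto.
  destruct Bh as [Eh Kh]; split; congruence.
Qed.

(* [Constraint R Kt j t] deletes, from the block of key [Kt] in [R], every fact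
   whose [j]-th value differs from that of [t]; [Kt] and [t] are read under a
   valuation. *)
Record constraint := Constraint { crel : relname; ckey : list term; cpos : nat; cval : term }.

Definition survivesb (c : constraint) (v : nat -> nat) (g : fact) : bool :=
  negb ((if relname_eq_dec (frel g) (crel c) then true else false)
        && prefix_matchb (fargs g) (map (eval_term v) (ckey c))
        && negb (Nat.eqb (nth (cpos c) (fargs g) 0) (eval_term v (cval c)))).

Lemma survivesb_spec c v g : survivesb c v g = true <->
  ~ (in_block (crel c) (map (eval_term v) (ckey c)) g /\
     nth (cpos c) (fargs g) 0 <> eval_term v (cval c)).
Proof.
  unfold survivesb, in_block; rewrite <- prefix_matchb_spec.
  destruct (relname_eq_dec (frel g) (crel c));
  destruct (prefix_matchb (fargs g) (map (eval_term v) (ckey c)));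
  destruct (Nat.eqb_spec (nth (cpos c) (fargs g) 0) (eval_term v (cval c)));
  simpl; intuition congruence.
Qed.

Definition prune (D : list constraint) (v : nat -> nat) (d : db) : db :=
  filter (fun g => forallb (fun c => survivesb c v g) D) d.

Definition constraint_vars (c : constraint) : list nat :=
  flat_map term_vars (ckey c) ++ term_vars (cval c).
Definition constraints_vars (D : list constraint) : list nat := flat_map constraint_vars D.

Lemma in_prune D v d g :
  In g (prune D v d) <-> In g d /\ forall c, In c D -> survivesb c v g = true.
Proof. unfold prune; rewrite filter_In, forallb_forall; tauto. Qed.

Lemma in_prune_app D1 D2 v d g :
  In g (prune (D1 ++ D2) v d) <-> In g (prune D2 v (prune D1 v d)).
Proof.
  rewrite !in_prune; setoid_rewrite in_app_iff; firstorder.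
Qed.

Lemma survivesb_ext c v w g : (forall z, In z (constraint_vars c) -> v z = w z) ->
  survivesb c v g = survivesb c w g.
Proof.
  intros H; unfold survivesb.
  rewrite (map_eval_term_ext v w), (eval_term_ext v w); auto;
    intros z Hz; apply H, in_or_app; auto.
Qed.

Lemma in_prune_ext D v w d g : (forall z, In z (constraints_vars D) -> v z = w z) ->
  (In g (prune D v d) <-> In g (prune D w d)).
Proof.
  intros H; rewrite !in_prune.
  assert (E : forall c, In c D -> survivesb c v g = survivesb c w g).
  { intros c Hc; apply survivesb_ext; intros z Hz; apply H, in_flat_map; eauto. }
  split; intros [Hg Hs]; split; auto; intros c Hc; [rewrite <- E|rewrite E]; auto.
Qed.

Lemma wf_prune D v d : wf_db d -> wf_db (prune D v d).
Proof.
  unfold wf_db; rewrite !Forall_forall; intros H g Hg; apply in_prune in Hg; apply H; tauto.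
Qed.

Definition FPrefixEq (ts Kt : list term) : formula :=
  FConj (map (fun i => FEq (nth i ts (TCst 0)) (nth i Kt (TCst 0))) (seq 0 (length Kt))).

Lemma holds_FPrefixEq d v ts Kt :
  holds d v (FPrefixEq ts Kt) <-> prefix_match (map (eval_term v) ts) (map (eval_term v) Kt).
Proof.
  unfold FPrefixEq, prefix_match; rewrite holds_FConj, length_map; split.
  - intros H i Hi; rewrite !nth_map_eval.
    apply (H (FEq (nth i ts (TCst 0)) (nth i Kt (TCst 0)))).
    apply in_map_iff; exists i; split; auto; apply in_seq; lia.
  - intros H p Hp; apply in_map_iff in Hp; destruct Hp as [i [<- Hi]]; apply in_seq in Hi.
    simpl; rewrite <- !nth_map_eval; apply H; lia.
Qed.

Lemma fv_FPrefixEq z ts Kt : In z (fv (FPrefixEq ts Kt)) ->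
  In z (flat_map term_vars ts) \/ In z (flat_map term_vars Kt).
Proof.
  unfold FPrefixEq; intros H; apply fv_FConj in H; destruct H as [p [Hp Hz]].
  apply in_map_iff in Hp; destruct Hp as [i [<- _]]; simpl in Hz.
  apply in_app_or in Hz; destruct Hz; [left|right]; eapply term_vars_nth; eauto.
Qed.

Definition FSurvives (c : constraint) (R : relname) (ts : list term) : formula :=
  if relname_eq_dec R (crel c)
  then FNot (FAnd (FPrefixEq ts (ckey c)) (FNot (FEq (nth (cpos c) ts (TCst 0)) (cval c))))
  else FTrue.

Lemma holds_FSurvives d v c R ts :
  holds d v (FSurvives c R ts) <-> survivesb c v (Fact R (map (eval_term v) ts)) = true.
Proof.
  rewrite survivesb_spec; unfold FSurvives, in_block; simpl.
  destruct (relname_eq_dec R (crel c)); simpl.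
  - rewrite holds_FPrefixEq, <- nth_map_eval; tauto.
  - tauto.
Qed.

Lemma fv_FSurvives z c R ts : In z (fv (FSurvives c R ts)) ->
  In z (flat_map term_vars ts) \/ In z (constraint_vars c).
Proof.
  unfold FSurvives, constraint_vars; destruct (relname_eq_dec R (crel c)); simpl; [|tauto].
  rewrite !in_app_iff; intros [Hz|[Hz|Hz]].
  - apply fv_FPrefixEq in Hz; tauto.
  - left; eapply term_vars_nth; eauto.
  - tauto.
Qed.

Definition FPrunedAtom (D : list constraint) (R : relname) (ts : list term) : formula :=
  FAnd (FAtom R ts) (FConj (map (fun c => FSurvives c R ts) D)).

Lemma holds_FPrunedAtom d v D R ts :
  holds d v (FPrunedAtom D R ts) <-> In (Fact R (map (eval_term v) ts)) (prune D v d).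
Proof.
  unfold FPrunedAtom; simpl; rewrite in_prune, holds_FConj.
  split; intros [H1 H2]; split; auto.
  - intros c Hc; apply (proj1 (holds_FSurvives d v c R ts)), H2, in_map_iff; eauto.
  - intros p Hp; apply in_map_iff in Hp; destruct Hp as [c [<- Hc]].
    apply (proj2 (holds_FSurvives d v c R ts)); auto.
Qed.

Lemma fv_FPrunedAtom z D R ts : In z (fv (FPrunedAtom D R ts)) ->
  In z (flat_map term_vars ts) \/ In z (constraints_vars D).
Proof.
  unfold FPrunedAtom; simpl; rewrite in_app_iff; intros [Hz|Hz]; auto.
  apply fv_FConj in Hz; destruct Hz as [p [Hp Hz]]; apply in_map_iff in Hp.
  destruct Hp as [c [<- Hc]]; apply fv_FSurvives in Hz; destruct Hz; auto.
  right; apply in_flat_map; eauto.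
Qed.

(** * Repairs *)

Lemma key_equal_refl f : key_equal f f.
Proof. split; reflexivity. Qed.

Lemma key_equal_sym f g : key_equal f g -> key_equal g f.
Proof. intros [H1 H2]; split; auto. Qed.

Lemma key_equal_trans f g h : key_equal f g -> key_equal g h -> key_equal f h.
Proof. intros [H1 H2] [H3 H4]; split; congruence. Qed.

Definition key_equal_dec f g : {key_equal f g} + {~ key_equal f g}.
Proof.
  unfold key_equal; destruct (relname_eq_dec (frel f) (frel g)); [|right; tauto].
  destruct (list_eq_dec Nat.eq_dec (firstn (rkey (frel f)) (fargs f))
                                    (firstn (rkey (frel g)) (fargs g))); [left|right]; tauto.
Defined.

Definition covers (r d : db) : Prop := forall h, In h d -> exists g, In g r /\ key_equal g h.

Lemma repair_iff r d : is_repair r d <-> incl r d /\ consistent r /\ covers r d.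
Proof.
  split.
  - intros [Hi [Hc Hmax]]; repeat split; auto.
    intros h Hh; apply NNPP; intros Hn; apply Hn; exists h; split; [|apply key_equal_refl].
    apply (Hmax (h :: r)); [intros x Hx; simpl; auto| |  |simpl; auto].
    + intros x [<-|Hx]; auto.
    + intros f g [<-|Hf] [<-|Hg] Hk; auto; exfalso; apply Hn; eauto using key_equal_sym.
  - intros [Hi [Hc Hcov]]; repeat split; auto.
    intros r' Hr Hr' Hc' h Hh.
    destruct (Hcov h (Hr' h Hh)) as [g [Hg Hk]].
    rewrite <- (Hc' g h (Hr g Hg) Hh Hk); auto.
Qed.

Lemma repair_covers r d : is_repair r d -> covers r d.
Proof. rewrite repair_iff; tauto. Qed.

Lemma repair_incl r d : is_repair r d -> incl r d.
Proof. intros [H _]; exact H. Qed.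

Lemma repair_consistent r d : is_repair r d -> consistent r.
Proof. intros [_ [H _]]; exact H. Qed.

Lemma repair_same_facts r d1 d2 : (forall g, In g d1 <-> In g d2) ->
  is_repair r d1 -> is_repair r d2.
Proof.
  intros H; rewrite !repair_iff; unfold incl, covers.
  intros [H1 [H2 H3]]; repeat split; auto.
  - intros g Hg; apply H; auto.
  - intros h Hh; apply H3, H; auto.
Qed.

Definition clashes (r : db) (f : fact) : bool :=
  existsb (fun g => if key_equal_dec g f then true else false) r.

Lemma clashes_spec r f : clashes r f = true <-> exists g, In g r /\ key_equal g f.
Proof.
  unfold clashes; rewrite existsb_exists; split; intros [g [Hg E]]; exists g; split; auto;
    destruct (key_equal_dec g f); congruence.
Qed.

Fixpoint greedy_extend (r l : db) : db :=
  match l with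
  | [] => r
  | f :: l' => greedy_extend (if clashes r f then r else f :: r) l'
  end.

Lemma greedy_extend_spec l : forall r, consistent r ->
  incl r (greedy_extend r l) /\ incl (greedy_extend r l) (r ++ l) /\
  consistent (greedy_extend r l) /\ covers (greedy_extend r l) l.
Proof.
  induction l as [|f l IH]; intros r Hc; simpl.
  - rewrite app_nil_r; repeat split; auto using incl_refl; intros h [].
  - destruct (clashes r f) eqn:E.
    + destruct (IH r Hc) as [H1 [H2 [H3 H4]]]; repeat split; auto.
      * intros x Hx; apply H2 in Hx; apply in_app_or in Hx; apply in_or_app; simpl; tauto.
      * intros h [<-|Hh]; auto.
        apply clashes_spec in E; destruct E as [g [Hg E]]; exists g; auto.
    + assert (Hc' : consistent (f :: r)).
      { intros g h [<-|Hg] [<-|Hh] Hk; auto; exfalso;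
          assert (clashes r f = true) by (apply clashes_spec; eauto using key_equal_sym);
          congruence. }
      destruct (IH (f :: r) Hc') as [H1 [H2 [H3 H4]]]; repeat split; auto.
      * intros x Hx; apply H1; simpl; auto.
      * intros x Hx; apply H2 in Hx; simpl in Hx; apply in_or_app; simpl.
        destruct Hx as [<-|Hx]; auto; apply in_app_or in Hx; tauto.
      * intros h [<-|Hh]; auto; exists f; split; [apply H1; simpl; auto|apply key_equal_refl].
Qed.

Lemma repair_extend s d : consistent s -> incl s d -> exists r, is_repair r d /\ incl s r.
Proof.
  intros Hc Hi; destruct (greedy_extend_spec d s Hc) as [H1 [H2 [H3 H4]]].
  exists (greedy_extend s d); split; auto; apply repair_iff; repeat split; auto.
  intros x Hx; apply H2 in Hx; apply in_app_or in Hx; destruct Hx; auto.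
Qed.

Lemma repair_exists d : exists r, is_repair r d.
Proof.
  destruct (repair_extend [] d) as [r [H _]]; eauto; [intros f g []|intros x []].
Qed.

(** * Certainty relative to a valuation *)

Definition certain_at (q : query) (X : list nat) (v : nat -> nat) (d : db) : Prop :=
  forall r, is_repair r d -> exists w, (forall y, In y X -> w y = v y) /\
    (forall A, In A q -> In (ground w A) r).

Lemma certain_at_ext q X v v' d : (forall y, In y X -> v y = v' y) ->
  certain_at q X v d -> certain_at q X v' d.
Proof.
  intros H Hc r Hr; destruct (Hc r Hr) as [w [H1 H2]]; exists w; split; auto.
  intros y Hy; rewrite H1, H; auto.
Qed.

Lemma certain_at_same_facts q X v d1 d2 : (forall g, In g d1 <-> In g d2) ->
  certain_at q X v d1 -> certain_at q X v d2.
Proof.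
  intros H Hc r Hr; apply Hc; eapply repair_same_facts; [|exact Hr].
  intros g; rewrite H; tauto.
Qed.

Lemma certain_at_incl q1 q2 X v d : incl q2 q1 ->
  certain_at q1 X v d -> certain_at q2 X v d.
Proof.
  intros H Hc r Hr; destruct (Hc r Hr) as [w [H1 H2]]; exists w; split; auto.
Qed.

Lemma certain_at_nil X v d : certain_at [] X v d.
Proof. intros r _; exists v; split; auto; intros A []. Qed.

Lemma certain_iff_certain_at q v d : certain q d <-> certain_at q [] v (prune [] v d).
Proof.
  assert (Hprune : forall g, In g (prune [] v d) <-> In g d)
    by (intros g; rewrite in_prune; simpl; tauto).
  split.
  - intros H r Hr; apply (repair_same_facts r _ d) in Hr; [|exact Hprune].
    destruct (H r Hr) as [w Hw]; exists w; split; [intros y []|auto].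
  - intros H r Hr; apply (repair_same_facts r d (prune [] v d)) in Hr;
      [|intros g; rewrite Hprune; tauto].
    destruct (H r Hr) as [w [_ Hw]]; exists w; auto.
Qed.

(* Rule SE2: valuations of the two parts can be merged, as they share only
   variables of [X]. *)
Lemma certain_at_union q q1 q2 X v d :
  (forall A, In A q <-> In A q1 \/ In A q2) ->
  (forall z, In z (qvars q1) -> In z (qvars q2) -> In z X) ->
  (certain_at q X v d <-> certain_at q1 X v d /\ certain_at q2 X v d).
Proof.
  intros Hq Hv; split.
  - intros Hc; split; apply (certain_at_incl q); auto; intros A; rewrite Hq; tauto.
  - intros [Hc1 Hc2] r Hr.
    destruct (Hc1 r Hr) as [w1 [H11 H12]], (Hc2 r Hr) as [w2 [H21 H22]].
    exists (fun z => if in_dec Nat.eq_dec z (qvars q1) then w1 z else w2 z); split.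
    + intros y Hy; destruct (in_dec Nat.eq_dec y (qvars q1)); auto.
    + intros A HA; apply Hq in HA; destruct HA as [HA|HA].
      * rewrite (ground_ext _ w1); auto; intros z Hz.
        destruct (in_dec Nat.eq_dec z (qvars q1)) as [_|n]; auto.
        exfalso; apply n, in_flat_map; eauto.
      * rewrite (ground_ext _ w2); auto; intros z Hz.
        destruct (in_dec Nat.eq_dec z (qvars q1)); auto.
        rewrite H11, H21; auto; apply Hv; auto; apply in_flat_map; eauto.
Qed.

(* Repairs chosen independently for each value of a key-invariant [val] can be
   glued: each block of [d] is repaired as in the repair indexed by its value. *)
Lemma glue_repairs (val : fact -> nat) (F : nat -> db) d :
  (forall f g, key_equal f g -> val f = val g) -> (forall c, is_repair (F c) d) ->
  is_repair (filter (fun f => if in_dec fact_eq_dec f (F (val f)) then true else false) d) d.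
Proof.
  intros Hval HF; apply repair_iff; repeat split.
  - intros f Hf; apply filter_In in Hf; tauto.
  - intros f g Hf Hg Hfg; apply filter_In in Hf; apply filter_In in Hg.
    destruct Hf as [_ Hf], Hg as [_ Hg].
    destruct (in_dec fact_eq_dec f (F (val f))) as [i1|]; [|discriminate].
    destruct (in_dec fact_eq_dec g (F (val g))) as [i2|]; [|discriminate].
    rewrite (Hval f g Hfg) in i1; apply (repair_consistent _ _ (HF (val g))); auto.
  - intros h Hh; destruct (repair_covers _ _ (HF (val h)) h Hh) as [g [Hg Hgh]].
    exists g; split; auto; apply filter_In; split.
    + apply (repair_incl _ _ (HF (val h))); auto.
    + rewrite (Hval g h Hgh); destruct (in_dec fact_eq_dec g (F (val h))); auto.
Qed.

Fixpoint index_of (t : term) (l : list term) : nat :=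
  match l with [] => 0 | s :: l' => if term_eq_dec s t then 0 else S (index_of t l') end.

Lemma index_of_spec t l : In t l -> index_of t l < length l /\ nth (index_of t l) l (TCst 0) = t.
Proof.
  induction l as [|s l IH]; simpl; [intros []|].
  destruct (term_eq_dec s t); [split; auto; lia|].
  intros [->|H]; [congruence|]; destruct (IH H); split; auto; lia.
Qed.

Section KeyVariable.

Variables (q : query) (x : nat).

Definition atom_of (R : relname) : option atom :=
  find (fun A => if relname_eq_dec (arel A) R then true else false) q.

Definition key_pos (R : relname) : nat :=
  match atom_of R with
  | Some A => index_of (TVar x) (firstn (rkey R) (aargs A))
  | None => 0
  end.

(* The value a fact gives to [x] when matched with the atom of [q] over its
   relation; as [x] is in the key of every atom, it depends only on the key. *)
Definition x_value (f : fact) : nat :=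
  if key_pos (frel f) <? rkey (frel f) then nth (key_pos (frel f)) (fargs f) 0 else 0.

Lemma x_value_key_equal f g : key_equal f g -> x_value f = x_value g.
Proof.
  unfold x_value; intros [H1 H2]; rewrite <- H1 in *.
  destruct (Nat.ltb_spec (key_pos (frel f)) (rkey (frel f))) as [Hl|Hl]; auto.
  rewrite <- (nth_firstn_lt _ _ _ _ Hl), H2, nth_firstn_lt; auto.
Qed.

Lemma x_value_ground w A : self_join_free q -> In A q -> In x (akey A) ->
  x_value (ground w A) = w x.
Proof.
  intros Hs HA Hx; unfold x_value, ground, key_pos; simpl.
  destruct (atom_of (arel A)) as [A'|] eqn:E; unfold atom_of in E.
  2:{ eapply find_none in E; eauto; destruct (relname_eq_dec (arel A) (arel A)); congruence. }
  destruct (find_some _ _ E) as [HA' HR].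
  destruct (relname_eq_dec (arel A') (arel A)) as [e|]; [|discriminate].
  assert (A' = A) as -> by (apply Hs; auto).
  unfold akey in Hx; apply in_term_vars, index_of_spec in Hx; destruct Hx as [H1 H2].
  rewrite length_firstn in H1.
  assert (Hp : index_of (TVar x) (firstn (rkey (arel A)) (aargs A)) < rkey (arel A)) by lia.
  rewrite (proj2 (Nat.ltb_lt _ _) Hp), nth_map_eval.
  rewrite nth_firstn_lt in H2 by auto; rewrite H2; reflexivity.
Qed.

(* Rule SE3: if every value of [x] had a repair refuting it, gluing these
   repairs along [x_value] would give a repair refuting every value at once. *)
Lemma certain_at_key_var X v d : self_join_free q ->
  (forall A, In A q -> In x (akey A)) -> ~ In x X ->
  (certain_at q X v d <-> exists c, certain_at q (x :: X) (upd v x c) d).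
Proof.
  intros Hs Hk Hx; split.
  - intros Hc; apply NNPP; intros Hn.
    assert (Hbad : forall c, exists r, is_repair r d /\ ~ exists w,
      (forall y, In y (x :: X) -> w y = upd v x c y) /\ (forall A, In A q -> In (ground w A) r)).
    { intros c; apply NNPP; intros Hnr; apply Hn; exists c; intros r Hr.
      apply NNPP; intros Hw; apply Hnr; exists r; auto. }
    set (F c := proj1_sig (constructive_indefinite_description _ (Hbad c))).
    assert (HF : forall c, is_repair (F c) d /\ ~ exists w,
      (forall y, In y (x :: X) -> w y = upd v x c y) /\ (forall A, In A q -> In (ground w A) (F c)))
      by (intros c; exact (proj2_sig (constructive_indefinite_description _ (Hbad c)))).
    destruct (Hc _ (glue_repairs x_value F d x_value_key_equal (fun c => proj1 (HF c))))
      as [w [Hw1 Hw2]].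
    apply (proj2 (HF (w x))); exists w; split.
    + intros y [<-|Hy]; [rewrite upd_eq; auto|].
      rewrite upd_neq; auto; intros ->; auto.
    + intros A HA; specialize (Hw2 A HA); apply filter_In in Hw2; destruct Hw2 as [_ Hw2].
      rewrite (x_value_ground w A Hs HA (Hk A HA)) in Hw2.
      destruct (in_dec fact_eq_dec (ground w A) (F (w x))); auto; discriminate.
  - intros [c Hc] r Hr; destruct (Hc r Hr) as [w [H1 H2]]; exists w; split; auto.
    intros y Hy; rewrite H1 by (simpl; auto); apply upd_neq; intros ->; auto.
Qed.

End KeyVariable.

Lemma wf_query_In q A : wf_query q -> In A q -> wf_atom A.
Proof. unfold wf_query; rewrite Forall_forall; auto. Qed.

Definition key_values (v : nat -> nat) (A : atom) : list nat :=
  map (eval_term v) (firstn (rkey (arel A)) (aargs A)).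

Lemma length_key_values v A : wf_atom A -> length (key_values v A) = rkey (arel A).
Proof. intros [[_ Hk] Hl]; unfold key_values; rewrite length_map, length_firstn; lia. Qed.

Lemma key_values_ext v w A : (forall z, In z (akey A) -> v z = w z) ->
  key_values v A = key_values w A.
Proof. intros H; apply map_eval_term_ext, H. Qed.

Lemma ground_in_block w v A : wf_atom A -> (forall z, In z (akey A) -> w z = v z) ->
  in_block (arel A) (key_values v A) (ground w A).
Proof.
  intros HA H; split; [reflexivity|]; simpl.
  pose proof HA as [[_ Hk] Hl].
  apply (prefix_match_firstn (rkey (arel A))); [rewrite length_map; lia|apply length_key_values; auto|].
  rewrite firstn_map; apply key_values_ext, H.
Qed.

Lemma ground_in_block_key_equal w v A g : wf_atom A -> wf_fact g ->
  (forall z, In z (akey A) -> w z = v z) -> in_block (arel A) (key_values v A) g ->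
  key_equal (ground w A) g.
Proof.
  intros HA Hg H Bg; apply (in_block_key_equal (arel A) (key_values v A)); auto.
  - destruct HA as [HR Hl]; split; simpl; [|rewrite length_map]; auto.
  - apply length_key_values; auto.
  - apply ground_in_block; auto.
Qed.

Lemma certain_at_atom A X v d : wf_db d -> wf_atom A -> (forall z, In z (avars A) -> In z X) ->
  (certain_at [A] X v d <-> In (ground v A) d /\
     forall g, In g d -> in_block (arel A) (key_values v A) g -> g = ground v A).
Proof.
  intros Hd HA HX.
  assert (Hgr : forall w, (forall y, In y X -> w y = v y) -> ground w A = ground v A)
    by (intros w Hw; apply ground_ext; intros z Hz; apply Hw, HX; auto).
  split.
  - intros Hc; destruct (repair_exists d) as [r0 Hr0].
    destruct (Hc r0 Hr0) as [w [Hw1 Hw2]].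
    specialize (Hw2 A (or_introl eq_refl)); rewrite Hgr in Hw2 by auto.
    split; [apply (repair_incl _ _ Hr0); auto|].
    intros g Hg Bg; destruct (repair_extend [g] d) as [r [Hr Hgr']].
    + intros f h [<-|[]] [<-|[]] _; auto.
    + intros f [<-|[]]; auto.
    + destruct (Hc r Hr) as [w' [Hw1' Hw2']].
      specialize (Hw2' A (or_introl eq_refl)); rewrite Hgr in Hw2' by auto.
      apply (repair_consistent _ _ Hr); [apply Hgr'; simpl; auto|auto|].
      apply key_equal_sym, (ground_in_block_key_equal v v); auto; apply (wf_db_In d); auto.
  - intros [Hin Hblock] r Hr; exists v; split; auto; intros A' [<-|[]].
    destruct (repair_covers r d Hr (ground v A) Hin) as [g [Hg Hk]].
    assert (Hgd : In g d) by (apply (repair_incl _ _ Hr); auto).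
    replace (ground v A) with g; auto; apply Hblock; auto.
    apply (key_equal_in_block _ _ g (ground v A)); auto.
    + apply (wf_db_In d); auto.
    + apply (wf_db_In d); auto.
    + apply length_key_values; auto.
    + apply ground_in_block; auto.
Qed.

Section BlockRestriction.

Variables (R : relname) (K : list nat) (j c : nat) (d d' : db).
Hypothesis wf_d : wf_db d.
Hypothesis length_K : length K = rkey R.
Hypothesis d'_spec :
  forall h, In h d' <-> In h d /\ ~ (in_block R K h /\ nth j (fargs h) 0 <> c).

Lemma repair_of_restriction r g :
  In g d -> in_block R K g -> nth j (fargs g) 0 = c -> is_repair r d' -> is_repair r d.
Proof.
  intros Hg Bg Hgc Hr; pose proof Hr as Hr'; apply repair_iff in Hr'.
  destruct Hr' as [Hi [Hc Hcov]]; apply repair_iff; repeat split; auto.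
  - intros f Hf; apply d'_spec, Hi; auto.
  - intros h Hh; destruct (classic (in_block R K h /\ nth j (fargs h) 0 <> c)) as [Bh|Bh].
    + destruct (Hcov g) as [g' [Hg' Hk']]; [apply d'_spec; intuition|].
      exists g'; split; auto; apply (key_equal_trans _ g); auto.
      apply (in_block_key_equal R K); auto; try apply (wf_db_In d); tauto.
    + apply Hcov, d'_spec; auto.
Qed.

Lemma repair_restriction r f :
  is_repair r d -> In f r -> in_block R K f -> nth j (fargs f) 0 = c -> is_repair r d'.
Proof.
  intros Hr Hf Bf Hfc; apply repair_iff; repeat split.
  - intros h Hh; apply d'_spec; split; [apply (repair_incl _ _ Hr); auto|].
    intros [Bh Hhc]; apply Hhc.
    rewrite <- Hfc; f_equal; f_equal; apply (repair_consistent _ _ Hr); auto.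
    apply (in_block_key_equal R K); auto; apply (wf_db_In d), (repair_incl _ _ Hr); auto.
  - exact (repair_consistent _ _ Hr).
  - intros h Hh; apply d'_spec in Hh; apply (repair_covers r d Hr); tauto.
Qed.

End BlockRestriction.

Definition block_constraint (A : atom) (j x : nat) : constraint :=
  Constraint (arel A) (firstn (rkey (arel A)) (aargs A)) j (TVar x).

Lemma in_prune_block_constraint A j x X v c d h :
  (forall z, In z (akey A) -> In z X) -> ~ In x X ->
  In h (prune [block_constraint A j x] (upd v x c) d) <->
  In h d /\ ~ (in_block (arel A) (key_values v A) h /\ nth j (fargs h) 0 <> c).
Proof.
  intros HkX Hx; rewrite in_prune.
  assert (E : map (eval_term (upd v x c)) (firstn (rkey (arel A)) (aargs A)) = key_values v A).
  { apply key_values_ext; intros z Hz; apply upd_neq; intros ->; apply Hx, HkX; auto. }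
  split.
  - intros [Hh Hs]; split; auto.
    specialize (Hs _ (or_introl eq_refl)); apply survivesb_spec in Hs; simpl in Hs.
    rewrite E, upd_eq in Hs; auto.
  - intros [Hh Hs]; split; auto; intros c' [<-|[]].
    apply survivesb_spec; simpl; rewrite E, upd_eq; auto.
Qed.

(* Rule SE4, one variable at a time: a repair keeps exactly one fact of the
   block of the ground key of [A]; committing to its value [c] at position [j]
   is the same as pruning the facts of the block with other values there. *)
Lemma certain_at_block q X x v d A j :
  wf_db d -> wf_query q -> In A q ->
  (forall z, In z (akey A) -> In z X) -> ~ In x X ->
  nth j (aargs A) (TCst 0) = TVar x ->
  (certain_at q X v d <->
    (exists g, In g d /\ in_block (arel A) (key_values v A) g) /\
    forall g, In g d -> in_block (arel A) (key_values v A) g ->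
      certain_at q (x :: X) (upd v x (nth j (fargs g) 0))
        (prune [block_constraint A j x] (upd v x (nth j (fargs g) 0)) d)).
Proof.
  intros Hd Hq HA HkX Hx Hj.
  pose proof (wf_query_In q A Hq HA) as HwA.
  pose proof (length_key_values v A HwA) as HK.
  set (B := in_block (arel A) (key_values v A)).
  assert (Hgr : forall w, (forall y, In y X -> w y = v y) ->
            B (ground w A) /\ nth j (fargs (ground w A)) 0 = w x).
  { intros w Hw; split; [apply ground_in_block; auto|].
    simpl; rewrite nth_map_eval, Hj; reflexivity. }
  split.
  - intros Hc; split.
    + destruct (repair_exists d) as [r0 Hr0], (Hc r0 Hr0) as [w [Hw1 Hw2]].
      exists (ground w A); split; [apply (repair_incl _ _ Hr0); auto|apply Hgr; auto].
    + intros g Hg Bg r Hr; set (c := nth j (fargs g) 0) in *.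
      pose proof (in_prune_block_constraint A j x X v c d) as Hspec.
      destruct (Hc r) as [w [Hw1 Hw2]].
      { apply (repair_of_restriction _ _ j c d _ Hd HK (fun h => Hspec h HkX Hx) r g); auto. }
      exists w; split; [|auto].
      intros y [<-|Hy]; [|rewrite upd_neq by (intros ->; auto); auto].
      rewrite upd_eq; destruct (Hgr w Hw1) as [Bw Hwx]; rewrite <- Hwx.
      assert (Hin : In (ground w A) (prune [block_constraint A j x] (upd v x c) d))
        by (apply (repair_incl _ _ Hr), Hw2; auto).
      apply Hspec in Hin; auto; destruct Hin as [_ Hn].
      apply NNPP; intros Hne; apply Hn; auto.
  - intros [[g0 [Hg0 Bg0]] Hall] r Hr.
    destruct (repair_covers r d Hr g0 Hg0) as [f [Hf Hfk]].
    assert (Hfd : In f d) by (apply (repair_incl _ _ Hr); auto).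
    assert (Bf : B f).
    { apply (key_equal_in_block _ _ f g0); auto; apply (wf_db_In d); auto. }
    destruct (Hall f Hfd Bf r) as [w [Hw1 Hw2]].
    { apply (repair_restriction _ _ j _ d _ Hd HK
               (fun h => in_prune_block_constraint A j x X v _ d h HkX Hx) r f); auto. }
    exists w; split; auto.
    intros y Hy; rewrite Hw1 by (simpl; auto); apply upd_neq; intros ->; auto.
Qed.

(** * First-order rewritings *)

Definition rewrites (q : query) (X : list nat) (D : list constraint) (phi : formula) : Prop :=
  (forall z, In z (fv phi) -> In z X) /\
  forall d v, wf_db d -> (holds d v phi <-> certain_at q X v (prune D v d)).

Lemma rewrites_nil X D : rewrites [] X D FTrue.
Proof.
  split; [intros z []|]; intros d v _; simpl; split; auto; intros _; apply certain_at_nil.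
Qed.

Lemma rewrites_same_atoms q1 q2 X D phi : (forall A, In A q1 <-> In A q2) ->
  rewrites q1 X D phi -> rewrites q2 X D phi.
Proof.
  intros H [Hfv Hp]; split; auto; intros d v Hd; rewrite Hp by auto.
  split; apply certain_at_incl; intros A; apply H.
Qed.

Lemma rewrites_union q q1 q2 X D p1 p2 :
  (forall A, In A q <-> In A q1 \/ In A q2) ->
  (forall z, In z (qvars q1) -> In z (qvars q2) -> In z X) ->
  rewrites q1 X D p1 -> rewrites q2 X D p2 -> rewrites q X D (FAnd p1 p2).
Proof.
  intros Hq Hv [F1 G1] [F2 G2]; split.
  - intros z Hz; simpl in Hz; apply in_app_or in Hz; destruct Hz; auto.
  - intros d v Hd; simpl; rewrite G1, G2, (certain_at_union q q1 q2) by auto; tauto.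
Qed.

Lemma rewrites_key_var q X D x p : self_join_free q ->
  (forall A, In A q -> In x (akey A)) -> ~ In x X ->
  (forall z, In z (constraints_vars D) -> In z X) ->
  rewrites q (x :: X) D p -> rewrites q X D (FExists x p).
Proof.
  intros Hs Hk Hx HD [Fp Gp]; split.
  - intros z Hz; simpl in Hz; apply in_remove in Hz; destruct Hz as [Hz Hzx].
    apply Fp in Hz; destruct Hz; [congruence|auto].
  - intros d v Hd; simpl; rewrite (certain_at_key_var q x X v _ Hs Hk Hx).
    assert (E : forall c g, In g (prune D (upd v x c) d) <-> In g (prune D v d)).
    { intros c g; apply in_prune_ext; intros z Hz; apply upd_neq; intros ->; auto. }
    split; intros [c Hc]; exists c; [apply Gp in Hc|apply Gp]; auto;
      eapply certain_at_same_facts; eauto; intros g; rewrite E; tauto.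
Qed.

Definition FInBlock (D : list constraint) (R : relname) (Kt : list term) (ys : list nat) : formula :=
  FAnd (FPrunedAtom D R (map TVar ys)) (FPrefixEq (map TVar ys) Kt).

Lemma fv_FInBlock z D R Kt ys : In z (fv (FInBlock D R Kt ys)) ->
  In z ys \/ In z (flat_map term_vars Kt) \/ In z (constraints_vars D).
Proof.
  simpl; rewrite in_app_iff; intros [Hz|Hz].
  - apply fv_FPrunedAtom in Hz; rewrite term_vars_map_TVar in Hz; tauto.
  - apply fv_FPrefixEq in Hz; rewrite term_vars_map_TVar in Hz; tauto.
Qed.

Section BlockQuantifiers.

Variables (d : db) (v : nat -> nat) (D : list constraint) (R : relname) (Kt : list term).
Variable ys : list nat.
Hypothesis wf_d : wf_db d.
Hypothesis ys_NoDup : NoDup ys.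
Hypothesis length_ys : length ys = rarity R.
Hypothesis ys_fresh :
  forall z, In z (flat_map term_vars Kt) \/ In z (constraints_vars D) -> ~ In z ys.

Lemma holds_FInBlock cs : length cs = length ys ->
  holds d (upds v ys cs) (FInBlock D R Kt ys) <->
  In (Fact R cs) (prune D v d) /\ in_block R (map (eval_term v) Kt) (Fact R cs).
Proof.
  intros Hl; unfold FInBlock, in_block; cbn [holds frel fargs].
  fold (holds d (upds v ys cs) (FPrunedAtom D R (map TVar ys))).
  rewrite holds_FPrunedAtom, holds_FPrefixEq, map_eval_TVar, map_upds by auto.
  rewrite (in_prune_ext D (upds v ys cs) v), (map_eval_term_ext (upds v ys cs) v Kt).
  - tauto.
  - intros z Hz; apply upds_notin, ys_fresh; auto.
  - intros z Hz; apply upds_notin, ys_fresh; auto.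
Qed.

Lemma length_fargs_pruned g : In g (prune D v d) -> frel g = R -> length (fargs g) = length ys.
Proof.
  intros Hg <-; rewrite length_ys; apply (wf_db_In (prune D v d)); auto; apply wf_prune; auto.
Qed.

Lemma holds_forall_block psi :
  holds d v (FForalls ys (FImpl (FInBlock D R Kt ys) psi)) <->
  forall g, In g (prune D v d) -> in_block R (map (eval_term v) Kt) g ->
    holds d (upds v ys (fargs g)) psi.
Proof.
  rewrite holds_FForalls; split.
  - intros H [R' cs] Hg Bg; pose proof (length_fargs_pruned _ Hg (proj1 Bg)) as Hl.
    destruct Bg as [HR Bk]; simpl in HR, Hl; subst R'.
    apply (proj1 (holds_FImpl _ _ _ _) (H _ Hl)), holds_FInBlock; repeat split; auto.
  - intros H cs Hl; apply holds_FImpl; intros Hb; apply holds_FInBlock in Hb; auto.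
    apply (H (Fact R cs)); tauto.
Qed.

Lemma holds_exists_block :
  holds d v (FExistss ys (FInBlock D R Kt ys)) <->
  exists g, In g (prune D v d) /\ in_block R (map (eval_term v) Kt) g.
Proof.
  rewrite holds_FExistss; split.
  - intros [cs [Hl H]]; apply holds_FInBlock in H; auto; exists (Fact R cs); auto.
  - intros [[R' cs] [Hg Bg]]; pose proof (length_fargs_pruned _ Hg (proj1 Bg)) as Hl.
    destruct Bg as [HR Bk]; simpl in HR, Hl; subst R'.
    exists cs; split; auto; apply holds_FInBlock; repeat split; auto.
Qed.

End BlockQuantifiers.

Lemma rewrites_holds_iff q X D p d v w :
  rewrites q X D p -> (forall z, In z (constraints_vars D) -> In z X) -> wf_db d ->
  (forall y, In y X -> v y = w y) ->
  (holds d v p <-> certain_at q X w (prune D w d)).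
Proof.
  intros [_ Hp] HD Hd Hvw; rewrite Hp by auto.
  assert (E : forall g, In g (prune D v d) <-> In g (prune D w d))
    by (intros g; apply in_prune_ext; auto).
  split; intros H.
  - apply (certain_at_same_facts _ _ _ (prune D v d)); [apply E|].
    apply (certain_at_ext _ _ v); auto.
  - apply (certain_at_same_facts _ _ _ (prune D w d)); [intros g; symmetry; apply E|].
    apply (certain_at_ext _ _ w); auto; intros y Hy; symmetry; auto.
Qed.

Definition FAtomRewriting (D : list constraint) (A : atom) (X : list nat) : formula :=
  let ys := fresh_vars X (rarity (arel A)) in
  FAnd (FPrunedAtom D (arel A) (aargs A))
    (FForalls ys (FImpl (FInBlock D (arel A) (firstn (rkey (arel A)) (aargs A)) ys)
                        (FPrefixEq (map TVar ys) (aargs A)))).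

Lemma rewrites_atom D A X : wf_atom A ->
  (forall z, In z (avars A) -> In z X) -> (forall z, In z (constraints_vars D) -> In z X) ->
  rewrites [A] X D (FAtomRewriting D A X).
Proof.
  intros HA HX HD; unfold FAtomRewriting.
  set (R := arel A); set (Kt := firstn (rkey R) (aargs A)); set (ys := fresh_vars X (rarity R)).
  assert (Hfr : forall z, In z X -> ~ In z ys) by (intros z Hz; apply fresh_vars_notin; auto).
  assert (Hnd : NoDup ys) by apply fresh_vars_NoDup.
  assert (Hlen : length ys = rarity R) by apply length_fresh_vars.
  assert (HKt : forall z, In z (flat_map term_vars Kt) -> In z X)
    by (intros z Hz; apply HX, akey_avars; exact Hz).
  split.
  - intros z Hz; cbn [fv] in Hz; rewrite in_app_iff in Hz; destruct Hz as [Hz|Hz].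
    + apply fv_FPrunedAtom in Hz; destruct Hz; auto.
    + apply fv_FForalls in Hz; destruct Hz as [Hz Hn]; cbn [fv FImpl] in Hz; rewrite in_app_iff in Hz.
      destruct Hz as [Hz|Hz]; [apply fv_FInBlock in Hz|apply fv_FPrefixEq in Hz;
        rewrite term_vars_map_TVar in Hz]; intuition.
  - intros d v Hd.
    assert (Hys : forall z, In z (flat_map term_vars Kt) \/ In z (constraints_vars D) -> ~ In z ys)
      by (intros z [Hz|Hz]; auto).
    cbn [holds]; fold (holds d v (FPrunedAtom D R (aargs A))).
    rewrite holds_FPrunedAtom, holds_forall_block, certain_at_atom by auto using wf_prune.
    assert (Hmatch : forall g, In g (prune D v d) -> frel g = R ->
      holds d (upds v ys (fargs g)) (FPrefixEq (map TVar ys) (aargs A)) <-> g = ground v A).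
    { intros g Hg HR.
      assert (Hl : length (fargs g) = length ys)
        by (apply (length_fargs_pruned d v D R); auto).
      rewrite holds_FPrefixEq, map_eval_TVar, map_upds by auto.
      rewrite (map_eval_term_ext _ v) by (intros z Hz; apply upds_notin, Hfr, HX; auto).
      rewrite prefix_match_full.
      - split; [intros E; rewrite (fact_eta g), HR, E; reflexivity|intros ->; reflexivity].
      - rewrite Hl, length_map, Hlen; destruct HA; auto. }
    apply and_iff_compat_l; split; intros H g Hg Bg;
      [apply (Hmatch g Hg (proj1 Bg))|apply (Hmatch g Hg (proj1 Bg))]; apply H; auto.
Qed.

Definition FBlockRewriting (D : list constraint) (A : atom) (j x : nat) (X : list nat)
    (p : formula) : formula :=
  let R := arel A in
  let Kt := firstn (rkey R) (aargs A) in
  let ys := fresh_vars (x :: X) (rarity R) in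
  FAnd (FExistss ys (FInBlock D R Kt ys))
       (FForalls ys (FImpl (FInBlock D R Kt ys)
                           (FForall x (FImpl (FEq (TVar x) (TVar (nth j ys 0))) p)))).

Lemma constraints_vars_block D A j x X :
  (forall z, In z (akey A) -> In z X) -> (forall z, In z (constraints_vars D) -> In z X) ->
  forall z, In z (constraints_vars (D ++ [block_constraint A j x])) -> In z (x :: X).
Proof.
  intros HkX HD z Hz; unfold constraints_vars in Hz; rewrite flat_map_app, in_app_iff in Hz.
  destruct Hz as [Hz|Hz]; [right; apply HD; exact Hz|].
  simpl in Hz; rewrite app_nil_r in Hz; unfold constraint_vars in Hz; simpl in Hz.
  rewrite in_app_iff in Hz.
  destruct Hz as [Hz|[<-|[]]]; [right; apply HkX; exact Hz|left; auto].
Qed.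

Lemma fv_FBlockRewriting D A j x X p : j < rarity (arel A) ->
  (forall z, In z (akey A) -> In z X) -> (forall z, In z (constraints_vars D) -> In z X) ->
  (forall z, In z (fv p) -> In z (x :: X)) ->
  forall z, In z (fv (FBlockRewriting D A j x X p)) -> In z X.
Proof.
  intros Hj HkX HD Hp z Hz; unfold FBlockRewriting in Hz.
  set (ys := fresh_vars (x :: X) (rarity (arel A))) in Hz.
  assert (Hfr : forall z, In z (x :: X) -> ~ In z ys) by (intros y Hy; apply fresh_vars_notin; auto).
  assert (Hjy : In (nth j ys 0) ys) by (apply nth_In; unfold ys; rewrite length_fresh_vars; auto).
  cbn [fv] in Hz; rewrite in_app_iff in Hz; destruct Hz as [Hz|Hz].
  - apply fv_FExistss in Hz; destruct Hz as [Hz Hn]; apply fv_FInBlock in Hz; intuition.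
  - apply fv_FForalls in Hz; destruct Hz as [Hz Hn]; cbn [fv FImpl] in Hz; rewrite in_app_iff in Hz.
    destruct Hz as [Hz|Hz]; [apply fv_FInBlock in Hz; intuition|].
    apply in_remove in Hz; destruct Hz as [Hz Hzx]; simpl in Hz.
    destruct Hz as [<-|[<-|Hz]]; [congruence|contradiction|].
    apply Hp in Hz; destruct Hz; [congruence|auto].
Qed.

Lemma rewrites_block q D A j x X p :
  wf_query q -> In A q -> (forall z, In z (akey A) -> In z X) -> ~ In x X ->
  nth j (aargs A) (TCst 0) = TVar x -> (forall z, In z (constraints_vars D) -> In z X) ->
  rewrites q (x :: X) (D ++ [block_constraint A j x]) p ->
  rewrites q X D (FBlockRewriting D A j x X p).
Proof.
  intros Hq HA HkX Hx Hj HD Hp; unfold FBlockRewriting.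
  set (R := arel A); set (Kt := firstn (rkey R) (aargs A)); set (ys := fresh_vars (x :: X) (rarity R)).
  assert (Hfr : forall z, In z (x :: X) -> ~ In z ys) by (intros z Hz; apply fresh_vars_notin; auto).
  assert (Hnd : NoDup ys) by apply fresh_vars_NoDup.
  assert (Hlen : length ys = rarity R) by apply length_fresh_vars.
  assert (Hys : forall z, In z (flat_map term_vars Kt) \/ In z (constraints_vars D) -> ~ In z ys)
    by (intros z [Hz|Hz]; apply Hfr; simpl; auto).
  assert (Hjl : j < length ys).
  { destruct (wf_query_In q A Hq HA) as [_ HlA]; rewrite Hlen; unfold R; rewrite <- HlA.
    destruct (Nat.lt_ge_cases j (length (aargs A))) as [|Hge]; auto.
    rewrite nth_overflow in Hj; [discriminate|auto]. }
  assert (Hxy : x <> nth j ys 0) by (intros E; apply (Hfr x); [simpl|rewrite E; apply nth_In]; auto).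
  split; [apply fv_FBlockRewriting; auto; [change (j < rarity R); lia|apply Hp]|].
  intros d v Hd; cbn [holds].
  rewrite holds_exists_block, holds_forall_block, (certain_at_block q X x v _ A j)
    by auto using wf_prune.
  assert (Hiff : forall g, In g (prune D v d) -> in_block R (map (eval_term v) Kt) g ->
    holds d (upds v ys (fargs g)) (FForall x (FImpl (FEq (TVar x) (TVar (nth j ys 0))) p)) <->
    certain_at q (x :: X) (upd v x (nth j (fargs g) 0))
      (prune [block_constraint A j x] (upd v x (nth j (fargs g) 0)) (prune D v d))).
  { intros g Hg Bg; set (c := nth j (fargs g) 0).
    assert (Hl : length (fargs g) = length ys)
      by (apply (length_fargs_pruned d v D R); auto; apply Bg).
    assert (Hu : upds v ys (fargs g) (nth j ys 0) = c)
      by (rewrite <- map_nth, map_upds by auto; apply nth_indep; lia).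
    assert (E : forall h, In h (prune (D ++ [block_constraint A j x]) (upd v x c) d) <->
                          In h (prune [block_constraint A j x] (upd v x c) (prune D v d)))
      by (intros h; rewrite in_prune_app, !(in_prune [_]), (in_prune_ext D (upd v x c) v);
          [tauto|intros z Hz; apply upd_neq; intros ->; auto]).
    assert (Hagree : forall y, In y (x :: X) -> upd (upds v ys (fargs g)) x c y = upd v x c y).
    { intros y Hy; destruct (Nat.eq_dec y x) as [->|ne]; [rewrite !upd_eq; auto|].
      rewrite !upd_neq by auto; apply upds_notin, Hfr; auto. }
    rewrite holds_forall_eq_impl, Hu by auto.
    rewrite (rewrites_holds_iff q (x :: X) (D ++ [block_constraint A j x]) p d _ (upd v x c))
      by (exact Hp || exact Hd || exact Hagree || exact (constraints_vars_block D A j x X HkX HD)).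
    split; intros Hc; eapply certain_at_same_facts; try exact Hc; intros h; rewrite E; tauto. }
  apply and_iff_compat_l; split; intros H g Hg Bg; apply (Hiff g Hg Bg), H; auto.
Qed.

(** * Following a run of IsSafe *)

(* A run of IsSafe replaces variables by the constant [a]; we instead record the
   replaced variables in [X] and keep them as free variables of the rewriting,
   since [a] may also occur as a constant of [q]. *)
Definition substs_term (X : list nat) (a : nat) (t : term) : term :=
  match t with
  | TVar y => if in_dec Nat.eq_dec y X then TCst a else TVar y
  | TCst c => TCst c
  end.
Definition substs_atom (X : list nat) (a : nat) (A : atom) : atom :=
  Atom (arel A) (map (substs_term X a) (aargs A)).
Definition substs (X : list nat) (a : nat) (q : query) : query := map (substs_atom X a) q.

Lemma term_vars_substs z X a ts :
  In z (flat_map term_vars (map (substs_term X a) ts)) <-> In z (flat_map term_vars ts) /\ ~ In z X.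
Proof.
  rewrite !in_term_vars, in_map_iff; split.
  - intros [[y|c] [Ht Hin]]; simpl in Ht; [|discriminate].
    destruct (in_dec Nat.eq_dec y X); [discriminate|]; inversion Ht; subst; auto.
  - intros [H1 H2]; exists (TVar z); split; auto; simpl; destruct (in_dec Nat.eq_dec z X); tauto.
Qed.

Lemma akey_substs_atom z X a A : In z (akey (substs_atom X a A)) <-> In z (akey A) /\ ~ In z X.
Proof. unfold akey, substs_atom; simpl; rewrite firstn_map; apply term_vars_substs. Qed.

Lemma avars_substs_atom z X a A : In z (avars (substs_atom X a A)) <-> In z (avars A) /\ ~ In z X.
Proof. apply term_vars_substs. Qed.

Lemma in_substs G X a q : In G (substs X a q) <-> exists A, In A q /\ G = substs_atom X a A.
Proof. unfold substs; rewrite in_map_iff; split; intros [A [H1 H2]]; eauto. Qed.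

Lemma qvars_substs z X a q : In z (qvars (substs X a q)) <-> In z (qvars q) /\ ~ In z X.
Proof.
  unfold qvars; rewrite !in_flat_map; split.
  - intros [G [HG Hz]]; apply in_substs in HG; destruct HG as [A [HA ->]].
    apply avars_substs_atom in Hz; destruct Hz; split; eauto.
  - intros [[A [HA Hz]] Hx]; exists (substs_atom X a A); split;
      [apply in_map; auto|apply avars_substs_atom; auto].
Qed.

Lemma qvars_same_atoms z q1 q2 : (forall G, In G q1 <-> In G q2) ->
  In z (qvars q1) -> In z (qvars q2).
Proof. intros H; unfold qvars; rewrite !in_flat_map; intros [A [HA Hz]]; exists A; rewrite <- H; auto. Qed.

Lemma subst_substs x a X q : subst x a (substs X a q) = substs (x :: X) a q.
Proof.
  unfold subst, substs; rewrite map_map; apply map_ext; intros A.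
  unfold subst_atom, substs_atom; simpl; f_equal; rewrite map_map; apply map_ext.
  intros [y|c]; simpl; auto.
  destruct (in_dec Nat.eq_dec y X); simpl.
  - destruct (Nat.eq_dec x y); auto.
  - destruct (Nat.eqb_spec y x) as [->|ne].
    + destruct (Nat.eq_dec x x); [auto|congruence].
    + destruct (Nat.eq_dec x y); [congruence|]; destruct (in_dec Nat.eq_dec y X); tauto.
Qed.

Lemma substs_nil a q : substs [] a q = q.
Proof.
  unfold substs; rewrite <- (map_id q) at 2; apply map_ext; intros [R ts]; unfold substs_atom; simpl.
  f_equal; rewrite <- (map_id ts) at 2; apply map_ext; intros [y|c]; auto.
Qed.

Lemma wf_query_incl q1 q2 : incl q1 q2 -> wf_query q2 -> wf_query q1.
Proof. unfold wf_query; rewrite !Forall_forall; auto. Qed.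

Lemma self_join_free_incl q1 q2 : incl q1 q2 -> self_join_free q2 -> self_join_free q1.
Proof. intros Hi H A B HA HB; apply H; auto. Qed.

Lemma substs_split X a q q1 q2 :
  (forall G, In G (substs X a q) <-> In G q1 \/ In G q2) ->
  exists qa qb, incl qa q /\ incl qb q /\ (forall A, In A q <-> In A qa \/ In A qb) /\
    (forall G, In G q1 <-> In G (substs X a qa)) /\ (forall G, In G q2 <-> In G (substs X a qb)).
Proof.
  intros Hs.
  set (part (qi : query) := filter (fun A => if in_dec atom_eq_dec (substs_atom X a A) qi
                                             then true else false) q).
  assert (Hpart : forall qi A, In A (part qi) <-> In A q /\ In (substs_atom X a A) qi).
  { intros qi A; unfold part; rewrite filter_In.
    destruct (in_dec atom_eq_dec (substs_atom X a A) qi); intuition congruence. }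
  assert (Hpre : forall qi, (forall G, In G qi -> In G (substs X a q)) ->
            forall G, In G qi <-> In G (substs X a (part qi))).
  { intros qi Hqi G; rewrite in_substs; split.
    - intros HG; destruct (proj1 (in_substs _ _ _ _) (Hqi G HG)) as [A [HA ->]].
      exists A; rewrite Hpart; auto.
    - intros [A [HA ->]]; apply Hpart in HA; tauto. }
  exists (part q1), (part q2); split; [|split; [|split; [|split]]].
  - intros A HA; apply Hpart in HA; tauto.
  - intros A HA; apply Hpart in HA; tauto.
  - intros A; rewrite !Hpart; split; [|tauto].
    intros HA; assert (HG : In (substs_atom X a A) q1 \/ In (substs_atom X a A) q2)
      by (apply Hs, in_map; auto).
    tauto.
  - apply Hpre; intros G HG; apply Hs; auto.
  - apply Hpre; intros G HG; apply Hs; auto.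
Qed.

Lemma substs_same_atoms_subst x a X q q' :
  (forall G, In G q' <-> In G (substs X a q)) ->
  forall G, In G (subst x a q') <-> In G (substs (x :: X) a q).
Proof.
  intros Hq' G; rewrite <- subst_substs; unfold subst; rewrite !in_map_iff.
  split; intros [B [HB HB']]; exists B; split; auto; apply Hq'; auto.
Qed.

Lemma substs_single X a q q' F : self_join_free q ->
  (forall G, In G q' <-> In G (substs X a q)) -> (forall G, In G q' <-> G = F) ->
  qvars q' = [] ->
  exists A, (forall B, In B q <-> B = A) /\ (forall z, In z (avars A) -> In z X).
Proof.
  intros Hs Hq' HF Hv.
  destruct (proj1 (in_substs _ _ _ _) (proj1 (Hq' F) (proj2 (HF F) eq_refl))) as [A [HA _]].
  exists A; split.
  - intros B; split; [intros HB|intros ->; auto]; apply Hs; auto.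
    assert (E : substs_atom X a B = substs_atom X a A)
      by (rewrite (proj1 (HF _)), (proj1 (HF (substs_atom X a A))); auto;
          apply Hq', in_map; auto).
    injection E; auto.
  - intros z Hz; apply NNPP; intros Hn.
    assert (Hz' : In z (qvars q')).
    { apply (qvars_same_atoms z (substs X a q)); [intros G; rewrite Hq'; tauto|].
      apply qvars_substs; split; auto; apply in_flat_map; eauto. }
    rewrite Hv in Hz'; destruct Hz'.
Qed.

Lemma substs_ground_key X a q F x :
  In F (substs X a q) -> akey F = [] -> In x (avars F) ->
  exists A, In A q /\ (forall z, In z (akey A) -> In z X) /\ In x (avars A) /\ ~ In x X.
Proof.
  intros HF Hkey Hx; apply in_substs in HF; destruct HF as [A [HA ->]].
  apply avars_substs_atom in Hx; exists A; repeat split; try tauto.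
  intros z Hz; apply NNPP; intros Hn.
  assert (Hz' : In z (akey (substs_atom X a A))) by (apply akey_substs_atom; auto).
  rewrite Hkey in Hz'; destruct Hz'.
Qed.

Lemma safe_rewritable a q' : safe a q' ->
  forall q X D, (forall G, In G q' <-> In G (substs X a q)) ->
  wf_query q -> self_join_free q -> (forall z, In z (constraints_vars D) -> In z X) ->
  exists phi, rewrites q X D phi.
Proof.
  induction 1 as [q' [[F HF] Hv]
                 |q' q1 q2 _ _ _ Hsplit Hdisj _ IH1 _ IH2
                 |q' x _ _ Hk _ IH
                 |q' F x _ _ _ HF Hkey Hx _ IH];
    intros q X D Hq' Hq Hs HD.
  -
    destruct (substs_single X a q q' F Hs Hq' HF Hv) as [A [Hsingle HX]].
    exists (FAtomRewriting D A X); apply (rewrites_same_atoms [A]).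
    + intros B; rewrite Hsingle; simpl; intuition.
    + apply rewrites_atom; auto; apply (wf_query_In q); [|apply Hsingle]; auto.
  -
    destruct (substs_split X a q q1 q2) as [qa [qb [Ha [Hb [Hab [H1 H2]]]]]].
    { intros G; rewrite <- Hq'; auto. }
    destruct (IH1 qa X D) as [p1 Hp1]; eauto using wf_query_incl, self_join_free_incl.
    destruct (IH2 qb X D) as [p2 Hp2]; eauto using wf_query_incl, self_join_free_incl.
    exists (FAnd p1 p2); apply (rewrites_union q qa qb); auto.
    intros z Hza Hzb; apply NNPP; intros Hn; apply (Hdisj z).
    + apply (qvars_same_atoms z (substs X a qa)); [intros G; rewrite H1; tauto|].
      apply qvars_substs; auto.
    + apply (qvars_same_atoms z (substs X a qb)); [intros G; rewrite H2; tauto|].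
      apply qvars_substs; auto.
  -
    destruct q as [|A0 q0] eqn:Eq; [exists FTrue; apply rewrites_nil|rewrite <- Eq in *].
    assert (HkA : forall A, In A q -> In x (akey A) /\ ~ In x X)
      by (intros A HA; apply (akey_substs_atom x X a A), Hk, Hq', in_map; auto).
    assert (HxX : ~ In x X) by (apply (HkA A0); rewrite Eq; simpl; auto).
    destruct (IH q (x :: X) D (substs_same_atoms_subst x a X q q' Hq') Hq Hs) as [p Hp].
    { intros z Hz; simpl; auto. }
    exists (FExists x p); apply rewrites_key_var; auto; apply HkA.
  -
    destruct (substs_ground_key X a q F x) as [A [HA [HkX [HxA HxX]]]]; auto; [apply Hq'; auto|].
    set (j := index_of (TVar x) (aargs A)).
    assert (Hj : nth j (aargs A) (TCst 0) = TVar x)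
      by (apply index_of_spec, in_term_vars, HxA).
    destruct (IH q (x :: X) (D ++ [block_constraint A j x])
                 (substs_same_atoms_subst x a X q q' Hq') Hq Hs
                 (constraints_vars_block D A j x X HkX HD)) as [p Hp].
    exists (FBlockRewriting D A j x X p); apply rewrites_block; auto.
Qed.

Theorem theorem6 (q : query) (a : nat) :
  wf_query q -> self_join_free q -> safe a q -> fo_expressible q.
Proof.
  intros Hq Hs Hsafe.
  destruct (safe_rewritable a q Hsafe q [] []) as [phi [Hfv Hphi]]; auto.
  { intros G; rewrite substs_nil; tauto. }
  exists phi; split.
  - unfold sentence; destruct (fv phi) as [|z l] eqn:E; auto.
    destruct (Hfv z); simpl; auto.
  - intros d Hd; unfold models; rewrite Hphi, certain_iff_certain_at by auto; reflexivity.
Qed.
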